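(* Let $n,m$ be positive integers, let $x\in\mathbb{R}^n$, $y\in\mathbb{R}^m$ and $Z=(z_{ij})\in\mathbb{R}^{n\times m}$. For $i\in[n]$, $j\in[m]$ put $P_{ij}:=(x_i,y_j,z_{ij})\in\mathbb{R}^3$, and define the convex sets \[ A_i:=\operatorname{conv}\{P_{ij}: j\in[m]\}\quad (i\in[n]),\qquad B_j:=\operatorname{conv}\{P_{ij}: i\in[n]\}\quad (j\in[m]). \] Then at least one of the following holds: (1) there is a real number $x_0$ and a line $l_x$ contained in the plane $\{(x_0,s,t): s,t\in\mathbb{R}\}$ that intersects every set $B_j$, $j\in[m]$; or (2) there is a real number $y_0$ and a line $l_y$ contained in the plane $\{(s,y_0,t): s,t\in\mathbb{R}\}$ that intersects every set $A_i$, $i\in[n]$.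
   Context: $[n]=\{1,\dots,n\}$. Each $A_i$ lies in the plane $\{x=x_i\}$, each $B_j$ lies in the plane $\{y=y_j\}$, and $P_{ij}\in A_i\cap B_j$. *)

From HB Require Import structures.
From mathcomp Require Import all_boot all_order all_algebra.
From mathcomp Require Import reals.
Set Implicit Arguments. Unset Strict Implicit. Unset Printing Implicit Defensive.
Import Order.TTheory GRing.Theory Num.Theory.
Local Open Scope ring_scope.

(* Points of R^3 are row vectors 'rV[R]_3; coordinates 0,1,2 are x,y,z. *)

Definition pt3 {R : realType} (a b c : R) : 'rV[R]_3 :=
  \row_(k < 3) (if val k == 0%N then a else if val k == 1%N then b else c).

Definition in_conv {R : realType} {I : finType} (f : I -> 'rV[R]_3) (p : 'rV[R]_3) :=
  exists w : I -> R, (forall i, 0 <= w i) /\ \sum_i w i = 1 /\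
                     p = \sum_i w i *: f i.

(* q lies on the line through p with direction d (d <> 0 required separately). *)
Definition on_line {R : realType} (p d q : 'rV[R]_3) := exists t : R, q = p + t *: d.

Definition Ppt {R : realType} {n m : nat} (x : 'I_n -> R) (y : 'I_m -> R)
  (Z : 'M[R]_(n, m)) (i : 'I_n) (j : 'I_m) : 'rV[R]_3 := pt3 (x i) (y j) (Z i j).

(* Condition (1) is linear: it holds iff there are x0, a, b and weights
   w_ij >= 0 with sum_i w_ij = 1, sum_i w_ij x_i = x0 and
   sum_i w_ij z_ij = a + b y_j for every j, the line {(x0, s, a + b s)} then
   meeting B_j at height y_j.  By Farkas' lemma, proved here by Fourier-Motzkin
   elimination, its failure is certified by affine functions
   al_j + be_j s + ga_j t, nonnegative at the points (x_i, z_ij) of column j,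
   with sum be = sum ga = sum ga_j y_j = 0 and sum al < 0; symmetrically for
   (2).  Two such certificates cannot coexist: weighting each one by the
   positive and negative parts of the other's ga cancels every z-term and
   leaves a combination of sum al < 0 and sum al' < 0 with nonnegative
   coefficients, not both zero, that would have to be nonnegative. *)

From HB Require Import structures.
From mathcomp Require Import all_boot all_order all_algebra.
From mathcomp Require Import reals ring lra.
Import Order.TTheory GRing.Theory Num.Theory.

Set Implicit Arguments.
Unset Strict Implicit.
Unset Printing Implicit Defensive.

Local Open Scope ring_scope.

Section Farkas.
Variable R : realFieldType.

Lemma sum_delta_mull (I : finType) (p : I) (a : R) (f : I -> R) :
  \sum_i (if i == p then a else 0) * f i = a * f p.
Proof. by rewrite (bigD1 p) //= eqxx big1 ?addr0 // => i /negbTE ->; rewrite mul0r. Qed.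

Lemma sum_delta_mulr (I : finType) (p : I) (a f : I -> R) :
  \sum_i f i * (if i == p then a i else 0) = f p * a p.
Proof. by rewrite (bigD1 p) //= eqxx big1 ?addr0 // => i /negbTE ->; rewrite mulr0. Qed.

Lemma sum_combA (I K : finType) (y : K -> R) (C : K -> I -> R) (f : I -> R) :
  \sum_i (\sum_k y k * C k i) * f i = \sum_k y k * \sum_i C k i * f i.
Proof.
under eq_bigr do rewrite mulr_suml.
rewrite exchange_big; apply: eq_bigr => k _; rewrite mulr_sumr.
by apply: eq_bigr => i _; rewrite mulrA.
Qed.

Lemma exists_between (I : finType) (lo hi : pred I) (L U : I -> R) :
  (forall i j, lo i -> hi j -> L i <= U j) ->
  exists t, (forall i, lo i -> L i <= t) /\ (forall j, hi j -> t <= U j).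
Proof.
move=> LU; case: (pickP lo) => [i0 lo_i0|lo0].
  exists (\big[Num.max/L i0]_(i | lo i) L i).
  split=> [i lo_i|j hi_j]; first exact: le_bigmax_cond.
  by apply: bigmax_le => [|i loi]; apply: LU.
case: (pickP hi) => [j0 hi_j0|hi0].
  exists (\big[Num.min/U j0]_(j | hi j) U j); split; first by move=> i; rewrite lo0.
  by move=> j hi_j; apply: bigmin_le_cond.
by exists 0; split=> i; rewrite ?lo0 ?hi0.
Qed.

Section FourierMotzkin.
Variables (I : finType) (c : I -> R).

Definition fm_comb (k : I + I * I) (i : I) : R :=
  match k with
  | inl p => if c p == 0 then (if i == p then 1 else 0) else 0
  | inr (p, q) => if (0 < c p) && (c q < 0) then
      (if i == p then - c q else 0) + (if i == q then c p else 0) else 0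
  end.

Lemma fm_comb_ge0 k i : 0 <= fm_comb k i.
Proof.
case: k => [p|[p q]] /=; first by case: (c p == 0); case: (i == p).
case: ifP => // /andP[cp_gt0 cq_lt0].
by apply: addr_ge0; case: ifP; rewrite // ?oppr_ge0 ltW.
Qed.

Lemma fm_comb_inl p f : \sum_i fm_comb (inl p) i * f i = if c p == 0 then f p else 0.
Proof.
rewrite /=; case: (c p == 0); first by rewrite sum_delta_mull mul1r.
by rewrite big1 // => i _; rewrite mul0r.
Qed.

Lemma fm_comb_inr p q f : \sum_i fm_comb (inr (p, q)) i * f i =
  if (0 < c p) && (c q < 0) then - c q * f p + c p * f q else 0.
Proof.
rewrite /=; case: ifP => _; last by rewrite big1 // => i _; rewrite mul0r.
rewrite -(sum_delta_mull p) -(sum_delta_mull q) -big_split /=.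
by apply: eq_bigr => i _; rewrite mulrDl.
Qed.

Lemma fm_comb_elim k : \sum_i fm_comb k i * c i = 0.
Proof.
case: k => [p|[p q]]; first by rewrite fm_comb_inl; case: eqP.
by rewrite fm_comb_inr; case: ifP => // _; rewrite mulNr mulrC addNr.
Qed.

(* The pair combinations say that every lower bound r q / c q (c q < 0) on [t]
   lies below every upper bound r p / c p (c p > 0). *)
Lemma fm_solvable (r : I -> R) :
  (forall k, 0 <= \sum_i fm_comb k i * r i) -> exists t, forall i, c i * t <= r i.
Proof.
move=> r_comb.
have lo_hi q p : c q < 0 -> 0 < c p -> r q / c q <= r p / c p.
  move=> cq_lt0 cp_gt0; have := r_comb (inr (p, q)).
  rewrite fm_comb_inr cp_gt0 cq_lt0 /= ler_pdivlMr // mulrAC ler_ndivrMr //.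
  lra.
have [t [lo_t t_hi]] := exists_between lo_hi.
exists t => i; case: (ltrgtP (c i) 0) => [ci_lt0|ci_gt0|ci0].
- by rewrite mulrC -ler_ndivrMr // lo_t.
- by rewrite mulrC -ler_pdivlMr // t_hi.
- by have := r_comb (inl i); rewrite fm_comb_inl ci0 eqxx mul0r.
Qed.

End FourierMotzkin.

Definition feasible (I V : finType) (A : I -> V -> R) (b : I -> R) :=
  exists x : V -> R, forall i, \sum_v A i v * x v <= b i.

Definition infeasibility_cert (I V : finType) (A : I -> V -> R) (b : I -> R) :=
  exists y : I -> R, [/\ forall i, 0 <= y i, forall v, \sum_i y i * A i v = 0
                       & \sum_i y i * b i < 0].

Lemma infeasibility_cert_comb (I K V : finType) (C : K -> I -> R)
    (A : I -> V -> R) (b : I -> R) :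
  (forall k i, 0 <= C k i) ->
  infeasibility_cert (fun k v => \sum_i C k i * A i v) (fun k => \sum_i C k i * b i) ->
  infeasibility_cert A b.
Proof.
move=> C_ge0 [y [y_ge0 yA0 yb_lt0]]; exists (fun i => \sum_k y k * C k i); split.
- by move=> i; apply: sumr_ge0 => k _; apply: mulr_ge0.
- by move=> v; rewrite sum_combA.
- by rewrite sum_combA.
Qed.

Lemma feasible_fm_elim (I V : finType) (A : I -> V -> R) (b : I -> R) (v0 : V) :
  feasible (fun k v => \sum_i fm_comb (A^~ v0) k i * A i v)
           (fun k => \sum_i fm_comb (A^~ v0) k i * b i) ->
  feasible A b.
Proof.
move=> [x' x'_sol]; pose r i := b i - \sum_v A i v * x' v.
have r_comb k : 0 <= \sum_i fm_comb (A^~ v0) k i * r i.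
  rewrite /r; under eq_bigr do rewrite mulrBr.
  by rewrite sumrB subr_ge0 -sum_combA; exact: x'_sol.
have [t t_sol] := fm_solvable r_comb.
exists (fun v => x' v + (if v == v0 then t else 0)) => i.
under eq_bigr do rewrite mulrDr.
by rewrite big_split /= sum_delta_mulr addrC -lerBrDr; exact: t_sol.
Qed.

Lemma farkas_supp (V : finType) n : forall (I : finType) (S : {set V})
    (A : I -> V -> R) (b : I -> R),
  #|S| = n -> (forall i v, v \notin S -> A i v = 0) ->
  feasible A b \/ infeasibility_cert A b.
Proof.
elim: n => [|n IHn] I S A b cardS A_supp.
  have A0 i v : A i v = 0.
    by apply: A_supp; move/eqP: cardS; rewrite cards_eq0 => /eqP->; rewrite inE.
  have [i0 b_i0_lt0|b_ge0] := pickP (fun i => b i < 0).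
    right; exists (fun i => if i == i0 then 1 else 0); split=> [i|v|].
    - by case: ifP.
    - by rewrite sum_delta_mull A0 mulr0.
    - by rewrite sum_delta_mull mul1r.
  left; exists (fun=> 0) => i; rewrite big1 => [|v _]; last exact: mulr0.
  by rewrite leNgt b_ge0.
have [v0 S_v0] : exists v0, v0 \in S by apply/set0Pn; rewrite -card_gt0 cardS.
have cardS' : #|S :\ v0| = n by move: cardS; rewrite (cardsD1 v0) S_v0 add1n => -[].
pose C := fm_comb (A^~ v0).
have C_supp k v : v \notin S :\ v0 -> \sum_i C k i * A i v = 0.
  rewrite in_setD1 negb_and negbK => /orP[/eqP->|v_notin_S]; first exact: fm_comb_elim.
  by rewrite big1 // => i _; rewrite A_supp ?mulr0.
have [feas'|cert'] := IHn _ _ _ (fun k => \sum_i C k i * b i) cardS' C_supp.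
  by left; exact: feasible_fm_elim feas'.
by right; apply: infeasibility_cert_comb cert'; exact: fm_comb_ge0.
Qed.

Lemma farkas (I V : finType) (A : I -> V -> R) (b : I -> R) :
  feasible A b \/ infeasibility_cert A b.
Proof. by apply: (@farkas_supp _ _ _ setT) => // i v; rewrite inE. Qed.

(* Each equation becomes two opposite inequalities and each sign constraint
   [0 <= w v] the row [- w v <= 0]. *)
Lemma farkas_mixed (F W E : finType) (P : E -> F -> R) (Q : E -> W -> R) (r : E -> R) :
  (exists (th : F -> R) (w : W -> R), (forall v, 0 <= w v) /\
     forall e, \sum_f P e f * th f + \sum_v Q e v * w v = r e) \/
  (exists u : E -> R, [/\ forall f, \sum_e u e * P e f = 0,
     forall v, 0 <= \sum_e u e * Q e v & \sum_e u e * r e < 0]).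
Proof.
pose M e (z : F + W) := match z with inl f => P e f | inr v => Q e v end.
pose N (z : F + W) v : R := if z is inr v' then (if v' == v then -1 else 0) else 0.
pose rows (h : E -> R) (k : W -> R) (i : (E + E) + W) :=
  match i with inl (inl e) => h e | inl (inr e) => - h e | inr v => k v end.
have [[x x_sol]|[y [y_ge0 yA0 yb_lt0]]] :=
  farkas (fun i z => rows (M^~ z) (N z) i) (rows r (fun=> 0)).
  have M_sum e : \sum_z M e z * x z =
      \sum_f P e f * x (inl f) + \sum_v Q e v * x (inr v) by rewrite big_sumType.
  left; exists (fun f => x (inl f)), (fun v => x (inr v)); split=> [v|e].
    have := x_sol (inr v); rewrite big_sumType /= big1 ?add0r => [|f _].
      by rewrite sum_delta_mull mulN1r oppr_le0.
    exact: mul0r.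
  apply/eqP; rewrite eq_le -M_sum (x_sol (inl (inl e))) /= -lerN2 -sumrN.
  by under eq_bigr do rewrite -mulNr; exact: (x_sol (inl (inr e))).
pose u e := y (inl (inl e)) - y (inl (inr e)).
have rows_sum h k : \sum_i y i * rows h k i = \sum_e u e * h e + \sum_v y (inr v) * k v.
  rewrite !big_sumType /= -big_split /=; congr (_ + _).
  by apply: eq_bigr => e _; rewrite /u; ring.
have rows_sum0 h : \sum_i y i * rows h (fun=> 0) i = \sum_e u e * h e.
  rewrite rows_sum; under [X in _ + X]eq_bigr do rewrite mulr0.
  by rewrite big1_eq addr0.
right; exists u; split=> [f|v|]; last by rewrite -rows_sum0.
  by rewrite -rows_sum0; exact: yA0 (inl f).
have := yA0 (inr v); rewrite rows_sum /=.
under [X in _ + X]eq_bigr do rewrite eq_sym.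
rewrite sum_delta_mulr mulrN1 => /eqP; rewrite subr_eq0 => /eqP ->; exact: y_ge0.
Qed.

End Farkas.

Section PlaneTransversal.
Variable R : realFieldType.

Definition plane_transversal (I J : finType) (x : I -> R) (y : J -> R)
    (Z : I -> J -> R) :=
  exists (x0 a b : R) (w : I -> J -> R), (forall i j, 0 <= w i j) /\
    forall j, [/\ \sum_i w i j = 1, \sum_i w i j * x i = x0
                & \sum_i w i j * Z i j = a + b * y j].

Definition transversal_cert (I J : finType) (x : I -> R) (y : J -> R)
    (Z : I -> J -> R) :=
  exists al be ga : J -> R,
    [/\ forall i j, 0 <= al j + be j * x i + ga j * Z i j, \sum_j be j = 0,
        \sum_j ga j = 0, \sum_j ga j * y j = 0 & \sum_j al j < 0].

Lemma plane_transversal_or_cert (I J : finType) (x : I -> R) (y : J -> R)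
    (Z : I -> J -> R) :
  plane_transversal x y Z \/ transversal_cert x y Z.
Proof.
(* Unknowns (x0, a, b) free and w >= 0; for each column j the three equations
   sum_i w_ij = 1, sum_i w_ij x_i - x0 = 0 and sum_i w_ij z_ij - a - b y_j = 0. *)
pose col (e : (J + J) + J) := match e with inl (inl j) | inl (inr j) | inr j => j end.
pose coef (e : (J + J) + J) i :=
  match e with inl (inl _) => 1 | inl (inr _) => x i | inr j => Z i j end.
pose P (e : (J + J) + J) (f : 'I_3) : R :=
  match e with inl (inl _) => 0 | inl (inr _) => [:: -1; 0; 0]`_f
             | inr j => [:: 0; -1; - y j]`_f end.
pose Q e (v : I * J) := if col e == v.2 then coef e v.1 else 0.
pose r (e : (J + J) + J) : R := if e is inl (inl _) then 1 else 0.
have [[th [w [w_ge0 w_eq]]]|[u [uP0 uQ_ge0 ur_lt0]]] := farkas_mixed P Q r.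
  have Q_sum e : \sum_v Q e v * w v = \sum_i w (i, col e) * coef e i.
    rewrite (eq_bigr (fun v => Q e (v.1, v.2) * w (v.1, v.2))) => [|[] //].
    rewrite -(pair_bigA _ (fun i j => Q e (i, j) * w (i, j))); apply: eq_bigr => i _.
    by under eq_bigr do rewrite /Q /= eq_sym; rewrite sum_delta_mull mulrC.
  left; exists (th ord0), (th (lift ord0 ord0)), (th (lift ord0 (lift ord0 ord0))).
  exists (fun i j => w (i, j)); split=> [i j|j]; first exact: w_ge0.
  have := w_eq (inl (inl j)); have := w_eq (inl (inr j)); have := w_eq (inr j).
  rewrite !Q_sum !big_ord_recl !big_ord0 /=.
  under [\sum_i w (i, j) * 1]eq_bigr do rewrite mulr1.
  split; lra.
right; exists (fun j => u (inl (inl j))), (fun j => u (inl (inr j))).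
exists (fun j => u (inr j)).
split.
- move=> i j; have := uQ_ge0 (i, j); rewrite !big_sumType /=.
  by rewrite /Q /= !sum_delta_mulr mulr1.
- by have := uP0 ord0; rewrite !big_sumType /= -!mulr_suml !mulr0 mulrN1; lra.
- have := uP0 (lift ord0 ord0).
  by rewrite !big_sumType /= -!mulr_suml !mulr0 mulrN1; lra.
- have := uP0 (lift ord0 (lift ord0 ord0)); rewrite !big_sumType /= -!mulr_suml !mulr0.
  by under eq_bigr do rewrite mulrN; rewrite sumrN; lra.
- by move: ur_lt0; rewrite !big_sumType /= -!mulr_suml !mulr0 mulr1 !addr0.
Qed.

Definition pospart (t : R) := if 0 < t then t else 0.

Lemma pospart_ge0 t : 0 <= pospart t.
Proof. by rewrite /pospart; case: ifP => // /ltW. Qed.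

Lemma pospart_subN t : pospart t - pospart (- t) = t.
Proof. by rewrite /pospart; case: ifP => ?; case: ifP => ?; lra. Qed.

Definition cross_term (I J : finType) (ga : J -> R) (ga' : I -> R) (Z : I -> J -> R) :=
  \sum_i \sum_j (pospart (ga j) * pospart (- ga' i)
                 - pospart (- ga j) * pospart (ga' i)) * Z i j.

Lemma cross_termN (I J : finType) (ga : J -> R) (ga' : I -> R) (Z : I -> J -> R) :
  cross_term ga' ga (fun j i => Z i j) = - cross_term ga ga' Z.
Proof.
rewrite /cross_term exchange_big -sumrN; apply: eq_bigr => i _.
by rewrite -sumrN; apply: eq_bigr => j _; ring.
Qed.

(* Weight the inequality at (i, j) by the negative part of ga' i if ga j > 0 and
   by its positive part otherwise: both parts have the same mass and the same
   x-moment, so the al- and be-terms do not see the choice and the be-terms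
   cancel. *)
Lemma cert_pairing (I J : finType) (x : I -> R) (Z : I -> J -> R)
    (al be ga : J -> R) (ga' : I -> R) :
  (forall i j, 0 <= al j + be j * x i + ga j * Z i j) -> \sum_j be j = 0 ->
  \sum_i ga' i = 0 -> \sum_i ga' i * x i = 0 ->
  0 <= (\sum_i pospart (ga' i)) * \sum_j al j + cross_term ga ga' Z.
Proof.
move=> c_ge0 be0 ga'0 ga'x0.
pose gp i := pospart (ga' i); pose gm i := pospart (- ga' i).
have gm_gp : \sum_i gm i = \sum_i gp i.
  have : \sum_i (gp i - gm i) = \sum_i ga' i.
    by apply: eq_bigr => i _; exact: pospart_subN.
  by rewrite sumrB ga'0 => /eqP; rewrite subr_eq0 eq_sym => /eqP.
have gmx_gpx : \sum_i gm i * x i = \sum_i gp i * x i.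
  have : \sum_i (gp i * x i - gm i * x i) = \sum_i ga' i * x i.
    by apply: eq_bigr => i _; rewrite -mulrBl pospart_subN.
  by rewrite sumrB ga'x0 => /eqP; rewrite subr_eq0 eq_sym => /eqP.
pose W i j := if 0 < ga j then gm i else gp i.
have W_sum j : \sum_i W i j = \sum_i gp i by rewrite /W; case: (0 < ga j).
have W_sumx j : \sum_i W i j * x i = \sum_i gp i * x i by rewrite /W; case: (0 < ga j).
have W_ga i j : W i j * ga j = pospart (ga j) * gm i - pospart (- ga j) * gp i.
  by rewrite /W /pospart oppr_gt0; case: (ltrgtP (ga j) 0) => [_|_|->]; ring.
have col_j j : \sum_i W i j * (al j + be j * x i + ga j * Z i j) =
    al j * \sum_i gp i + be j * \sum_i gp i * x i +
    \sum_i (pospart (ga j) * gm i - pospart (- ga j) * gp i) * Z i j.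
  rewrite -(W_sum j) -(W_sumx j) !mulr_sumr -!big_split /=.
  by apply: eq_bigr => i _; rewrite -W_ga; ring.
have : 0 <= \sum_j \sum_i W i j * (al j + be j * x i + ga j * Z i j).
  apply: sumr_ge0 => j _; apply: sumr_ge0 => i _; apply: mulr_ge0 => //.
  by rewrite /W; case: ifP => _; exact: pospart_ge0.
rewrite (eq_bigr _ (fun j _ => col_j j)) !big_split /= -!mulr_suml be0 mul0r addr0.
by rewrite mulrC exchange_big.
Qed.

Lemma transversal_cert_gamma_pos (I J : finType) (i0 : I) (x : I -> R)
    (Z : I -> J -> R) (al be ga : J -> R) :
  (forall i j, 0 <= al j + be j * x i + ga j * Z i j) -> \sum_j be j = 0 ->
  \sum_j ga j = 0 -> \sum_j al j < 0 ->
  0 < \sum_j pospart (ga j).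
Proof.
move=> c_ge0 be0 ga0 al_lt0.
rewrite lt_def sumr_ge0 ?andbT => [|j _]; last exact: pospart_ge0.
apply/negP => /eqP gap_sum0.
have ga_le0 j : 0 <= - ga j.
  have := @psumr_eq0P _ _ _ _ (fun j _ => pospart_ge0 (ga j)) gap_sum0 j isT.
  by rewrite /pospart; case: ltP => ? ?; lra.
have ga_eq0 j : ga j = 0.
  have nga_sum0 : \sum_k - ga k = 0 by rewrite sumrN ga0 oppr0.
  have := @psumr_eq0P _ _ predT _ (fun k _ => ga_le0 k) nga_sum0 j isT.
  by move/eqP; rewrite oppr_eq0 => /eqP.
have gaZ0 : \sum_j ga j * Z i0 j = 0 by rewrite big1 // => j _; rewrite ga_eq0 mul0r.
have : 0 <= \sum_j (al j + be j * x i0 + ga j * Z i0 j) by apply: sumr_ge0 => j _.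
by rewrite !big_split /= -mulr_suml be0 mul0r gaZ0; lra.
Qed.

Lemma transversal_certs_disjoint (I J : finType) (i0 : I) (x : I -> R) (y : J -> R)
    (Z : I -> J -> R) :
  transversal_cert x y Z -> transversal_cert y x (fun j i => Z i j) -> False.
Proof.
case=> al [be [ga [c_ge0 be0 ga0 gay0 al_lt0]]].
case=> al' [be' [ga' [c'_ge0 be'0 ga'0 ga'x0 al'_lt0]]].
have pair := cert_pairing c_ge0 be0 ga'0 ga'x0.
have pair' := cert_pairing c'_ge0 be'0 ga0 gay0.
have G_gt0 := transversal_cert_gamma_pos i0 c_ge0 be0 ga0 al_lt0.
have G'_ge0 : 0 <= \sum_i pospart (ga' i).
  by apply: sumr_ge0 => i _; exact: pospart_ge0.
rewrite cross_termN in pair'.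
nra.
Qed.

End PlaneTransversal.

Section Geometry.
Variable R : realType.

Lemma pt3D (a b c a' b' c' : R) :
  pt3 a b c + pt3 a' b' c' = pt3 (a + a') (b + b') (c + c').
Proof. by apply/rowP => -[[|[|[|k]]] lt_k3]; rewrite !mxE. Qed.

Lemma pt3Z (t a b c : R) : t *: pt3 a b c = pt3 (t * a) (t * b) (t * c).
Proof. by apply/rowP => -[[|[|[|k]]] lt_k3]; rewrite !mxE. Qed.

Lemma pt3_eq0 (a b c : R) : (pt3 a b c == 0) = [&& a == 0, b == 0 & c == 0].
Proof.
apply/eqP/and3P => [/rowP abc0|[/eqP-> /eqP-> /eqP->]]; last first.
  by apply/rowP => -[[|[|[|k]]] lt_k3]; rewrite !mxE.
have := abc0 ord0; have := abc0 (lift ord0 ord0).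
have := abc0 (lift ord0 (lift ord0 ord0)).
by rewrite !mxE /= => -> -> ->; rewrite eqxx.
Qed.

Lemma on_line_coord (p d q : 'rV[R]_3) k :
  on_line p d q -> d ord0 k = 0 -> q ord0 k = p ord0 k.
Proof. by move=> [t ->] dk0; rewrite !mxE dk0 mulr0 addr0. Qed.

Lemma in_conv_pt3 (I : finType) (w a b c : I -> R) :
  (forall i, 0 <= w i) -> \sum_i w i = 1 ->
  in_conv (fun i => pt3 (a i) (b i) (c i))
          (pt3 (\sum_i w i * a i) (\sum_i w i * b i) (\sum_i w i * c i)).
Proof.
move=> w_ge0 w1; exists w; split=> //; split=> //.
apply/rowP => -[[|[|[|k]]] lt_k3]; rewrite summxE mxE.
all: by under [RHS]eq_bigr do rewrite !mxE.
Qed.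

Lemma plane_transversal_x_line (n m : nat) (x : 'I_n -> R) (y : 'I_m -> R)
    (Z : 'M[R]_(n, m)) :
  plane_transversal x y (fun i j => Z i j) ->
  exists (x0 : R) (p d : 'rV[R]_3), d != 0 /\
    (forall q, on_line p d q -> q ord0 0 = x0) /\
    (forall j, exists q, on_line p d q /\ in_conv (fun i => Ppt x y Z i j) q).
Proof.
case=> x0 [a [b [w [w_ge0 w_col]]]].
exists x0, (pt3 x0 0 a), (pt3 0 1 b); split; first by rewrite pt3_eq0 oner_eq0 andbF.
split=> [q q_on|j]; first by rewrite (on_line_coord q_on) !mxE.
have [w1 wx wZ] := w_col j.
exists (pt3 x0 (y j) (a + b * y j)); split.
  by exists (y j); rewrite pt3Z pt3D mulr0 mulr1 addr0 add0r mulrC.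
have := in_conv_pt3 x (fun=> y j) (Z^~ j) (w_ge0^~ j) w1.
by rewrite -mulr_suml w1 mul1r wx wZ.
Qed.

Lemma plane_transversal_y_line (n m : nat) (x : 'I_n -> R) (y : 'I_m -> R)
    (Z : 'M[R]_(n, m)) :
  plane_transversal y x (fun j i => Z i j) ->
  exists (y0 : R) (p d : 'rV[R]_3), d != 0 /\
    (forall q, on_line p d q -> q ord0 1 = y0) /\
    (forall i, exists q, on_line p d q /\ in_conv (fun j => Ppt x y Z i j) q).
Proof.
case=> y0 [c [e [w [w_ge0 w_row]]]].
exists y0, (pt3 0 y0 c), (pt3 1 0 e); split; first by rewrite pt3_eq0 oner_eq0.
split=> [q q_on|i]; first by rewrite (on_line_coord q_on) !mxE.
have [w1 wy wZ] := w_row i.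
exists (pt3 (x i) y0 (c + e * x i)); split.
  by exists (x i); rewrite pt3Z pt3D mulr0 mulr1 addr0 add0r mulrC.
have := in_conv_pt3 (fun=> x i) y (Z i) (w_ge0^~ i) w1.
by rewrite -mulr_suml w1 mul1r wy wZ.
Qed.

End Geometry.

Theorem theorem1 (R : realType) (n m : nat) (hn : (0 < n)%N) (hm : (0 < m)%N)
  (x : 'I_n -> R) (y : 'I_m -> R) (Z : 'M[R]_(n, m)) :
  (exists (x0 : R) (p d : 'rV[R]_3),
      d != 0 /\
      (forall q, on_line p d q -> q ord0 0 = x0) /\
      (forall j : 'I_m, exists q, on_line p d q /\
                           in_conv (fun i : 'I_n => Ppt x y Z i j) q))
  \/
  (exists (y0 : R) (p d : 'rV[R]_3),
      d != 0 /\
      (forall q, on_line p d q -> q ord0 1 = y0) /\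
      (forall i : 'I_n, exists q, on_line p d q /\
                           in_conv (fun j : 'I_m => Ppt x y Z i j) q)).
Proof.
(* [hm] is not needed: one nonempty index set already rules out both certificates. *)
have [Tx|Cx] := plane_transversal_or_cert x y (fun i j => Z i j).
  by left; exact: plane_transversal_x_line.
have [Ty|Cy] := plane_transversal_or_cert y x (fun j i => Z i j).
  by right; exact: plane_transversal_y_line.
by case: (transversal_certs_disjoint (Ordinal hn) Cx Cy).
Qed.
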